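(* Let $A\subseteq\mathbb{N}$ with $\operatorname{BD}(A)=\alpha>0$, and let $(I_n)$ be a sequence of intervals $I_n=[a_n,b_n]\subseteq\mathbb{N}$ with $|I_n|\to\infty$ and $\lim_{n\to\infty}\frac{|A\cap I_n|}{|I_n|}=\alpha$. Then there is $L\subseteq\mathbb{N}$ such that (i) $\limsup_{n\to\infty}\frac{|L\cap I_n|}{|I_n|}\ge\alpha$, and (ii) for every finite $F\subseteq L$, the set $A\cap\bigcap_{x\in F}(A-x)$ is infinite.
   Context: $\mathbb{N}=\{1,2,3,\dots\}$; $[a,b]=\{c\in\mathbb{N}:a\le c\le b\}$; $A-x=\{a-x: a\in A\}$. The (upper) Banach density of $A\subseteq\mathbb{N}$ is $\operatorname{BD}(A)=\lim_{n\to\infty}\sup_{m\in\mathbb{N}}\frac{|A\cap[m,m+n]|}{n}$. *)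

From Stdlib Require Import Reals Lra Lia Arith List.
Import ListNotations.
Open Scope R_scope.

(* A subset of N = {1,2,3,...} is represented by a boolean predicate
   S : nat -> bool with S 0 = false. *)

Definition cnt (P : nat -> bool) (a b : nat) : nat :=
  length (filter P (seq a (S b - a))).

Definition ilen (a b : nat) : nat := (S b - a)%nat.

Definition rdens (P : nat -> bool) (a b : nat) : R :=
  INR (cnt P a b) / INR (ilen a b).

(* Upper Banach density:
   BD(S) = lim_{n->oo} sup_{m in N} |S ∩ [m,m+n]| / n,
   stated as: the sequence of these suprema converges to alpha. *)
Definition BD_is (P : nat -> bool) (alpha : R) : Prop :=
  exists s : nat -> R,
    (forall n : nat,
        is_lub (fun r => exists m : nat, (1 <= m)%nat /\
                           r = INR (cnt P m (m + n)) / INR n) (s n))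
    /\ Un_cv s alpha.

Definition infinite_set (S : nat -> Prop) : Prop :=
  forall N : nat, exists y : nat, (N < y)%nat /\ S y.

Definition in_shift_inter (A : nat -> bool) (F : list nat) (y : nat) : Prop :=
  A y = true /\ forall x, In x F -> A (y + x)%nat = true.

(* Let BD(A) = α > 0 and let I_n = [a_n, b_n] be intervals of length → ∞ in
   which A has density → α.  The set L is built as a limit of translates of A.

   - Test windows: since BD(A) = α, for each k some interval I_{m k}, m k ≥ k,
     has the property that each of its translates contains at most
     (α + η_k²)|I_{m k}| points of A, where η_k = α/(8·2^k).
   - Averaging (double counting): inside I_j, j large, the translates
     y + I_{m k} containing at most (α - η_k)|I_{m k}| points ("light" ones)
     occupy at most 2η_k of I_j; summing over k < K, the union occupies at
     most α/2, so there are points y ∈ A, arbitrarily large, none of whose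
     first K translated windows is light.
   - Compactness (König's lemma): a limit pattern w : N → bool exists whose
     every prefix occurs in A at such points y, for every K.
   L := w ∩ N⁺.  Part (ii) holds because every finite F ⊆ w occurs shifted
   at infinitely many points of A; part (i) because L copies on I_{m k} a
   translate of A that is not light, so its density there exceeds α - η_k. *)

From Stdlib Require Import Reals Lra Lia List Classical ClassicalEpsilon.
Import ListNotations.
Open Scope bool_scope.
Open Scope R_scope.

Fixpoint nsum (f : nat -> nat) (n : nat) : nat :=
  match n with O => O | S n => (nsum f n + f n)%nat end.

Definition b2n (b : bool) : nat := if b then 1%nat else 0%nat.

Definition count (P : nat -> bool) (c l : nat) : nat :=
  nsum (fun i => b2n (P (c + i)%nat)) l.

Lemma nsum_ext f g n :
  (forall i, (i < n)%nat -> f i = g i) -> nsum f n = nsum g n.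
Proof.
  induction n as [|n IH]; intros H; simpl; auto.
  rewrite IH by (intros; apply H; lia). rewrite (H n) by lia. reflexivity.
Qed.

Lemma nsum_le f g n :
  (forall i, (i < n)%nat -> (f i <= g i)%nat) -> (nsum f n <= nsum g n)%nat.
Proof.
  induction n as [|n IH]; intros H; simpl; auto.
  specialize (IH ltac:(intros; apply H; lia)). specialize (H n ltac:(lia)). lia.
Qed.

Lemma nsum_add f g n : nsum (fun i => f i + g i)%nat n = (nsum f n + nsum g n)%nat.
Proof. induction n; simpl; lia. Qed.

Lemma nsum_const c n : nsum (fun _ => c) n = (n * c)%nat.
Proof. induction n; simpl; lia. Qed.

Lemma nsum_swap (h : nat -> nat -> nat) n m :
  nsum (fun i => nsum (h i) m) n = nsum (fun x => nsum (fun i => h i x) n) m.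
Proof.
  induction n as [|n IH]; simpl.
  - rewrite (nsum_const 0 m). lia.
  - rewrite IH, <- nsum_add. reflexivity.
Qed.

Lemma nsum_weighted_bound f g n p r :
  (forall i, (i < n)%nat -> INR (f i) + p * INR (g i) <= r) ->
  INR (nsum f n) + p * INR (nsum g n) <= INR n * r.
Proof.
  induction n as [|n IH]; intros H; [simpl; lra|].
  cbn [nsum]. rewrite !plus_INR, S_INR.
  specialize (IH ltac:(intros; apply H; lia)). specialize (H n ltac:(lia)). nra.
Qed.

Lemma cnt_count P a b : cnt P a b = count P a (S b - a).
Proof.
  unfold cnt. generalize (S b - a)%nat as l. intro l. revert a.
  induction l as [|l IH]; intros c; [reflexivity|].
  rewrite seq_S, filter_app, length_app, IH. unfold count; simpl.
  destruct (P (c + l)%nat); simpl; lia.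
Qed.

Lemma count_split P c x l : count P c (x + l) = (count P c x + count P (c + x) l)%nat.
Proof.
  unfold count. induction l as [|l IH]; simpl; [rewrite Nat.add_0_r; lia|].
  rewrite Nat.add_succ_r. simpl. rewrite IH.
  replace (c + (x + l))%nat with (c + x + l)%nat by lia. lia.
Qed.

Lemma count_le P c l : (count P c l <= l)%nat.
Proof.
  unfold count. induction l as [|l IH]; simpl; auto.
  destruct (P (c + l)%nat); simpl; lia.
Qed.

Lemma count_shift P c x l : (count P c l <= count P (c + x) l + x)%nat.
Proof.
  pose proof (count_split P c x l) as Hxl. pose proof (count_split P c l x) as Hlx.
  pose proof (count_le P c x). rewrite Nat.add_comm in Hlx. lia.
Qed.

Lemma count_pos P c l :
  (0 < count P c l)%nat -> exists i, (i < l)%nat /\ P (c + i)%nat = true.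
Proof.
  unfold count. induction l as [|l IH]; simpl; intros H; [lia|].
  destruct (P (c + l)%nat) eqn:E; [exists l; split; auto|].
  simpl in H. destruct IH as [i [Hi Hp]]; [lia|]. exists i; split; auto.
Qed.

Lemma count_cover P Q R c l :
  (forall y, P y = true -> Q y = true \/ R y = true) ->
  (count P c l <= count Q c l + count R c l)%nat.
Proof.
  intros H. unfold count. rewrite <- nsum_add. apply nsum_le. intros i _.
  specialize (H (c + i)%nat). revert H.
  destruct (P (c + i)%nat), (Q (c + i)%nat), (R (c + i)%nat); simpl;
    intuition (try lia; try discriminate).
Qed.

Lemma count_initial N c l : (count (fun y => y <=? N) c l <= S N)%nat.
Proof.
  enough (count (fun y => y <=? N) c l <= Nat.min l (S N))%nat by lia.
  unfold count. induction l as [|l IH]; simpl; [lia|].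
  destruct (Nat.leb_spec (c + l) N); simpl; lia.
Qed.

Definition light (A : nat -> bool) (o l : nat) (theta : R) (y : nat) : bool :=
  if Rle_dec (INR (count A (y + o) l)) (theta * INR l) then true else false.

(* If every window of length l has at most (α+δ)·l points
   of A, then among the translates y ∈ [c, c+λ) the light ones (at most (α-η)·l
   points) are few as soon as A is dense in [c, c+λ): counting the pairs
   (y, z) with z ∈ A in the window of y in two ways gives the bound. *)
Lemma light_translates_bound A alpha eta delta o l c lam :
  (1 <= l)%nat ->
  (forall y, INR (count A (y + o) l) <= (alpha + delta) * INR l) ->
  (delta + eta) * INR (count (light A o l (alpha - eta)) c lam)
    <= INR lam * (alpha + delta) - INR (count A c lam) + INR (o + l).
Proof.
  intros hl hup.
  set (win := fun i => count A (c + i + o) l).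
  (* each light window is (δ+η)·l below the uniform upper bound *)
  assert (Hwin : INR (nsum win lam)
      + ((delta + eta) * INR l) * INR (count (light A o l (alpha - eta)) c lam)
      <= INR lam * ((alpha + delta) * INR l)).
  { apply nsum_weighted_bound. intros i _. unfold win, light.
    pose proof (hup (c + i)%nat).
    destruct (Rle_dec _ _); simpl; lra. }
  (* each point of A in [c, c+λ) lies in l windows, up to the boundary *)
  assert (Hcov : (l * count A c lam <= nsum win lam + l * (o + l))%nat).
  { assert (E : nsum win lam = nsum (fun x => count A (c + (o + x)) lam) l).
    { unfold win, count. rewrite nsum_swap. apply nsum_ext. intros x _.
      apply nsum_ext. intros i _. do 2 f_equal. lia. }
    rewrite E, <- !nsum_const, <- nsum_add. apply nsum_le. intros x Hx.
    pose proof (count_shift A c (o + x) lam). lia. }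
  apply le_INR in Hcov. rewrite plus_INR, !mult_INR in Hcov.
  assert (Hl : 1 <= INR l) by (apply (le_INR 1); auto).
  nra.
Qed.

Fixpoint anyb (f : nat -> nat -> bool) (K y : nat) : bool :=
  match K with O => false | S K => anyb f K y || f K y end.

Lemma anyb_mono f K K' y : (K <= K')%nat -> anyb f K' y = false -> anyb f K y = false.
Proof.
  intros HK; induction HK as [|K' HK IH]; auto.
  simpl. intros Hor. apply Bool.orb_false_iff in Hor. tauto.
Qed.

Lemma anyb_false f K y k : (k < K)%nat -> anyb f K y = false -> f k y = false.
Proof.
  induction K as [|K IH]; intros Hk H; [lia|]. simpl in H.
  apply Bool.orb_false_iff in H.
  destruct (Nat.eq_dec k K); [subst; tauto|]. apply IH; [lia|tauto].
Qed.

Lemma anyb_count_telescope (f : nat -> nat -> bool) (c lam : nat -> nat) (g : nat -> R) :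
  (forall k, exists J, forall j, (J <= j)%nat ->
     INR (count (f k) (c j) (lam j)) <= (g k - g (S k)) * INR (lam j)) ->
  forall K, exists J, forall j, (J <= j)%nat ->
     INR (count (anyb f K) (c j) (lam j)) <= (g 0%nat - g K) * INR (lam j).
Proof.
  intros Hf K. induction K as [|K [J1 H1]].
  - exists 0%nat. intros j _.
    assert (E : count (anyb f 0) (c j) (lam j) = 0%nat).
    { unfold count. rewrite (nsum_ext _ (fun _ => 0%nat)) by reflexivity.
      rewrite nsum_const. lia. }
    rewrite E. simpl. lra.
  - destruct (Hf K) as [J2 H2]. exists (Nat.max J1 J2). intros j Hj.
    specialize (H1 j ltac:(lia)). specialize (H2 j ltac:(lia)).
    assert (Hc := count_cover (anyb f (S K)) (anyb f K) (f K) (c j) (lam j)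
                    (fun y Hy => proj1 (Bool.orb_true_iff _ _) Hy)).
    apply le_INR in Hc. rewrite plus_INR in Hc. lra.
Qed.

Definition matches (A : nat -> bool) (u : list bool) (y : nat) : Prop :=
  forall i, (i < length u)%nat -> A (y + i)%nat = nth i u false.

Definition recurrent (A : nat -> bool) (G : nat -> nat -> Prop) (u : list bool) : Prop :=
  forall K N, exists y, (N < y)%nat /\ G K y /\ matches A u y.

Lemma matches_snoc A u x y :
  matches A u y -> A (y + length u)%nat = x -> matches A (u ++ [x]) y.
Proof.
  intros H Hx i Hi. rewrite length_app in Hi; simpl in Hi.
  destruct (Nat.lt_ge_cases i (length u)).
  - rewrite app_nth1 by auto. auto.
  - replace i with (length u) by lia. rewrite app_nth2, Nat.sub_diag by lia. auto.
Qed.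

(* König step: for a decreasing family G, a recurrent word has a recurrent
   one-letter extension (otherwise both extensions fail beyond some K, N). *)
Lemma recurrent_extend A (G : nat -> nat -> Prop)
  (Gmono : forall K K' y, (K <= K')%nat -> G K' y -> G K y) u :
  recurrent A G u -> recurrent A G (u ++ [true]) \/ recurrent A G (u ++ [false]).
Proof.
  intros H. destruct (classic (recurrent A G (u ++ [true]))) as [H1|H1]; [left; auto|right].
  apply not_all_ex_not in H1. destruct H1 as [K1 H1].
  apply not_all_ex_not in H1. destruct H1 as [N1 H1].
  intros K N. destruct (H (Nat.max K K1) (Nat.max N N1)) as [y [Hy [HG Hm]]].
  destruct (A (y + length u)%nat) eqn:E.
  - exfalso. apply H1. exists y. repeat split; [lia| |apply matches_snoc; auto].
    exact (Gmono _ _ _ (Nat.le_max_r K K1) HG).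
  - exists y. repeat split; [lia| |apply matches_snoc; auto].
    exact (Gmono _ _ _ (Nat.le_max_l K K1) HG).
Qed.

Definition extend A G (u : list bool) : list bool :=
  if excluded_middle_informative (recurrent A G (u ++ [true])) then u ++ [true]
  else u ++ [false].

Fixpoint greedy A G (p : nat) : list bool :=
  match p with O => [] | S p => extend A G (greedy A G p) end.

Lemma greedy_length A G p : length (greedy A G p) = p.
Proof.
  induction p; simpl; auto. unfold extend.
  destruct excluded_middle_informative; rewrite length_app; simpl; lia.
Qed.

Lemma greedy_nth A G p i :
  (i < p)%nat -> nth i (greedy A G p) false = nth i (greedy A G (S i)) false.
Proof.
  induction p as [|p IH]; intros Hi; [lia|].
  destruct (Nat.eq_dec i p); [subst; auto|].
  rewrite <- IH by lia. simpl. unfold extend. pose proof (greedy_length A G p).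
  destruct excluded_middle_informative; rewrite app_nth1 by lia; auto.
Qed.

Lemma pattern_compactness (A : nat -> bool) (G : nat -> nat -> Prop)
  (Gmono : forall K K' y, (K <= K')%nat -> G K' y -> G K y)
  (Gunb : forall K N, exists y, (N < y)%nat /\ G K y) :
  exists w : nat -> bool, forall p K N, exists y, (N < y)%nat /\ G K y /\
     forall i, (i < p)%nat -> A (y + i)%nat = w i.
Proof.
  exists (fun i => nth i (greedy A G (S i)) false).
  assert (HG : forall p, recurrent A G (greedy A G p)).
  { induction p as [|p IH].
    - intros K N. destruct (Gunb K N) as [y [H1 H2]]. exists y; repeat split; auto.
      intros i Hi; simpl in Hi; lia.
    - simpl. unfold extend. destruct excluded_middle_informative as [H|H]; auto.
      destruct (recurrent_extend A G Gmono _ IH); tauto. }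
  intros p K N. destruct (HG p K N) as [y [H1 [H2 H3]]]. exists y; repeat split; auto.
  intros i Hi. rewrite H3 by (rewrite greedy_length; auto). apply greedy_nth. auto.
Qed.

Lemma BD_window_bound A alpha :
  BD_is A alpha -> forall delta, 0 < delta -> exists n0, forall n m,
    (n0 <= n)%nat -> (1 <= m)%nat -> INR (count A m (S n)) <= (alpha + delta) * INR (S n).
Proof.
  intros [s [hs hcv]] delta hdelta.
  destruct (hcv delta hdelta) as [M HM].
  exists (Nat.max M 1). intros n m Hn Hm.
  assert (Hsup : INR (count A m (S n)) <= s n * INR n).
  { destruct (hs n) as [Hub _].
    assert (Hr := Hub (INR (cnt A m (m + n)) / INR n) (ex_intro _ m (conj Hm eq_refl))).
    rewrite cnt_count in Hr. replace (S (m + n) - m)%nat with (S n) in Hr by lia.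
    assert (0 < INR n) by (apply lt_0_INR; lia).
    apply Rmult_le_compat_r with (r := INR n) in Hr; [|lra].
    unfold Rdiv in Hr. rewrite Rmult_assoc, Rinv_l in Hr by lra. lra. }
  assert (Hs : s n <= alpha + delta).
  { specialize (HM n ltac:(lia)). unfold Rdist in HM.
    pose proof (Rle_abs (s n - alpha)). lra. }
  assert (Hn0 : 0 < INR n) by (apply lt_0_INR; lia).
  assert (Hs0 : 0 <= s n) by (pose proof (pos_INR (count A m (S n))); nra).
  rewrite S_INR. nra.
Qed.

Lemma pattern_return_times (A w : nat -> bool) :
  (forall p N, exists y, (N < y)%nat /\ A y = true /\
     forall i, (i < p)%nat -> A (y + i)%nat = w i) ->
  forall F, (forall x, In x F -> w x = true) -> infinite_set (in_shift_inter A F).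
Proof.
  intros Hw F HF N.
  destruct (Hw (S (list_max F)) N) as [y [Hy [HAy Hm]]].
  exists y. repeat split; auto. intros x Hx.
  assert (Hmax : (x <= list_max F)%nat).
  { pose proof (proj1 (list_max_le F (list_max F)) (Nat.le_refl _)) as Hall.
    rewrite Forall_forall in Hall. auto. }
  rewrite Hm by lia. auto.
Qed.

Definition threshold (alpha : R) (k : nat) : R := alpha / 8 / 2 ^ k.

Lemma threshold_pos alpha k : 0 < alpha -> 0 < threshold alpha k.
Proof. intros H. unfold threshold. apply Rdiv_lt_0_compat; [lra|apply pow_lt; lra]. Qed.

Lemma threshold_telescope alpha k :
  2 * threshold alpha k = alpha / 2 / 2 ^ k - alpha / 2 / 2 ^ (S k).
Proof.
  unfold threshold. simpl. assert (0 < 2 ^ k) by (apply pow_lt; lra). field. lra.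
Qed.

Section Intervals.

Variables (A : nat -> bool) (alpha : R) (a b : nat -> nat).
Hypothesis halpha : 0 < alpha.
Hypothesis ha : forall n, (1 <= a n)%nat.
Hypothesis hlen : cv_infty (fun n => INR (ilen (a n) (b n))).
Hypothesis hdens : Un_cv (fun n => rdens A (a n) (b n)) alpha.

Let lam (j : nat) : nat := ilen (a j) (b j).

Lemma eventually_dense theta :
  theta < alpha -> exists J, forall j, (J <= j)%nat ->
    theta * INR (lam j) < INR (count A (a j) (lam j)).
Proof.
  intros Htheta.
  destruct (hdens (alpha - theta)) as [J1 H1]; [lra|].
  destruct (hlen 0) as [J2 H2].
  exists (Nat.max J1 J2). intros j Hj.
  specialize (H1 j ltac:(unfold ge; lia)). specialize (H2 j ltac:(lia)).
  unfold Rdist, rdens in H1. rewrite cnt_count in H1.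
  change (INR (ilen (a j) (b j))) with (INR (lam j)) in H1, H2.
  change (S (b j) - a j)%nat with (lam j) in H1.
  apply Rabs_def2 in H1. destruct H1 as [_ H1].
  assert (E : INR (count A (a j) (lam j)) / INR (lam j) * INR (lam j)
              = INR (count A (a j) (lam j))) by (field; lra).
  nra.
Qed.

Lemma test_window :
  BD_is A alpha -> forall eta, 0 < eta -> forall k, exists j, (k <= j)%nat /\
    (1 <= lam j)%nat /\
    forall y, INR (count A (y + a j) (lam j)) <= (alpha + eta * eta) * INR (lam j).
Proof.
  intros hBD eta heta k.
  destruct (BD_window_bound A alpha hBD (eta * eta)) as [n0 Hn0]; [nra|].
  destruct (hlen (INR (S n0))) as [J HJ].
  set (j := Nat.max k J). exists j.
  specialize (HJ j ltac:(lia)). apply INR_lt in HJ. fold (lam j) in HJ.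
  split; [lia|]. split; [lia|]. intros y.
  replace (lam j) with (S (pred (lam j))) by lia.
  apply Hn0; [lia|]. specialize (ha j). lia.
Qed.

Lemma few_light o l eta :
  (1 <= l)%nat -> 0 < eta ->
  (forall y, INR (count A (y + o) l) <= (alpha + eta * eta) * INR l) ->
  exists J, forall j, (J <= j)%nat ->
    INR (count (light A o l (alpha - eta)) (a j) (lam j)) <= 2 * eta * INR (lam j).
Proof.
  intros hl heta hup.
  destruct (eventually_dense (alpha - eta * eta / 2)) as [J1 H1]; [nra|].
  destruct (hlen (2 * INR (o + l) / (eta * eta))) as [J2 H2].
  exists (Nat.max J1 J2). intros j Hj.
  specialize (H1 j ltac:(lia)). specialize (H2 j ltac:(lia)).
  change (INR (ilen (a j) (b j))) with (INR (lam j)) in H2.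
  pose proof (light_translates_bound A alpha eta (eta * eta) o l (a j) (lam j) hl hup) as HB.
  set (L := INR (lam j)) in *. set (C := INR (count A (a j) (lam j))) in *.
  set (B := INR (count (light A o l (alpha - eta)) (a j) (lam j))) in *.
  set (D := INR (o + l)) in *.
  assert (HB0 : 0 <= B) by apply pos_INR.
  assert (HD : 0 <= D) by apply pos_INR.
  (* the boundary term D is negligible: 2D < η²·L *)
  assert (HDL : 2 * D < eta * eta * L).
  { assert (He2 : 0 < eta * eta) by nra.
    assert (E : 2 * D / (eta * eta) * (eta * eta) = 2 * D) by (field; lra).
    rewrite <- E, (Rmult_comm (eta * eta) L). apply Rmult_lt_compat_r; auto. }
  assert (0 <= eta * eta * B) by (apply Rmult_le_pos; nra).
  assert (eta * (B - 2 * eta * L) <= 0) by lra.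
  nra.
Qed.

(* Good points: if B occupies at most α/2 of I_j eventually, then A \ B has
   points beyond every N (the points of A up to N are negligible in I_j). *)
Lemma good_points (B : nat -> bool) :
  (exists J, forall j, (J <= j)%nat ->
     INR (count B (a j) (lam j)) <= alpha / 2 * INR (lam j)) ->
  forall N, exists y, (N < y)%nat /\ A y = true /\ B y = false.
Proof.
  intros [J1 H1] N.
  destruct (eventually_dense (3 * alpha / 4)) as [J2 H2]; [lra|].
  destruct (hlen (4 * INR (S N) / alpha)) as [J3 H3].
  set (j := Nat.max J1 (Nat.max J2 J3)).
  specialize (H1 j ltac:(lia)). specialize (H2 j ltac:(lia)). specialize (H3 j ltac:(lia)).
  change (INR (ilen (a j) (b j))) with (INR (lam j)) in H3.
  set (P := fun y => A y && negb (y <=? N) && negb (B y)).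
  set (small := fun y => (y <=? N) || B y).
  assert (Hc1 := count_cover A P small (a j) (lam j)
    ltac:(intros y Hy; unfold P, small; rewrite Hy;
          destruct (y <=? N), (B y); simpl; auto)).
  assert (Hc2 := count_cover small (fun y => y <=? N) B (a j) (lam j)
    ltac:(intros y Hy; apply Bool.orb_true_iff; exact Hy)).
  pose proof (count_initial N (a j) (lam j)) as Hc3.
  assert (HP : (0 < count P (a j) (lam j))%nat).
  { apply INR_lt. simpl.
    assert (4 * INR (S N) / alpha * alpha = 4 * INR (S N)) by (field; lra).
    apply le_INR in Hc1, Hc2, Hc3. rewrite plus_INR in Hc1, Hc2. nra. }
  destruct (count_pos _ _ _ HP) as [i [_ HPi]].
  unfold P in HPi. apply andb_prop in HPi. destruct HPi as [HPi HBi].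
  apply andb_prop in HPi. destruct HPi as [HAi HNi].
  apply Bool.negb_true_iff in HBi, HNi. apply Nat.leb_gt in HNi.
  exists (a j + i)%nat. auto.
Qed.

Lemma avoid_light (m : nat -> nat) :
  (forall k, (1 <= lam (m k))%nat /\ forall y, INR (count A (y + a (m k)) (lam (m k)))
      <= (alpha + threshold alpha k * threshold alpha k) * INR (lam (m k))) ->
  forall K N, exists y, (N < y)%nat /\ A y = true /\
    anyb (fun k => light A (a (m k)) (lam (m k)) (alpha - threshold alpha k)) K y = false.
Proof.
  intros hm K. apply good_points.
  destruct (anyb_count_telescope (fun k => light A (a (m k)) (lam (m k)) (alpha - threshold alpha k))
              a lam (fun k => alpha / 2 / 2 ^ k)) with K as [J HJ].
  { intros k. destruct (hm k) as [hl hup].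
    destruct (few_light _ _ _ hl (threshold_pos alpha k halpha) hup) as [J HJ].
    exists J. intros j Hj. rewrite <- threshold_telescope. auto. }
  exists J. intros j Hj. specialize (HJ j Hj).
  assert (0 < alpha / 2 / 2 ^ K) by (apply Rdiv_lt_0_compat; [lra|apply pow_lt; lra]).
  pose proof (pos_INR (lam j)). simpl in HJ. nra.
Qed.

Lemma copied_upper_density (L : nat -> bool) (m : nat -> nat) (eta : nat -> R) :
  (forall k, (k <= m k)%nat) -> Un_cv eta 0 ->
  (forall k, exists y, light A (a (m k)) (lam (m k)) (alpha - eta k) y = false /\
     forall i, (i < lam (m k))%nat -> L (a (m k) + i)%nat = A (y + a (m k) + i)%nat) ->
  forall eps, 0 < eps -> forall N, exists n, (N <= n)%nat /\ alpha - eps < rdens L (a n) (b n).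
Proof.
  intros hm heta hcopy eps Heps N.
  destruct (heta eps Heps) as [k0 Hk0].
  set (k := Nat.max N k0). destruct (hcopy k) as [y [Hlight Hcopy]].
  exists (m k). split; [specialize (hm k); lia|].
  specialize (Hk0 k ltac:(unfold ge, k; lia)). unfold Rdist in Hk0.
  rewrite Rminus_0_r in Hk0. pose proof (Rle_abs (eta k)).
  unfold light in Hlight. destruct (Rle_dec _ _) as [_|Hheavy]; [discriminate|].
  apply Rnot_le_lt in Hheavy.
  unfold rdens. rewrite cnt_count.
  change (S (b (m k)) - a (m k))%nat with (lam (m k)).
  change (ilen (a (m k)) (b (m k))) with (lam (m k)).
  replace (count L (a (m k)) (lam (m k))) with (count A (y + a (m k)) (lam (m k)))
    by (symmetry; unfold count; apply nsum_ext; intros i Hi; rewrite Hcopy; auto).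
  set (C := INR (count A (y + a (m k)) (lam (m k)))) in *.
  (* a heavy window is nonempty *)
  assert (Hl : 0 < INR (lam (m k))).
  { destruct (lam (m k)) eqn:E; [|apply lt_0_INR; lia].
    unfold C, count in Hheavy. simpl in Hheavy. lra. }
  assert (E : C / INR (lam (m k)) * INR (lam (m k)) = C) by (field; lra).
  apply (Rmult_lt_reg_r (INR (lam (m k)))); auto. nra.
Qed.

End Intervals.

Theorem lemma3p3 (A : nat -> bool) (alpha : R) (a b : nat -> nat)
  (hA0 : A 0%nat = false)
  (hBD : BD_is A alpha) (halpha : 0 < alpha)
  (ha : forall n, (1 <= a n)%nat)
  (hlen : cv_infty (fun n => INR (ilen (a n) (b n))))
  (hdens : Un_cv (fun n => rdens A (a n) (b n)) alpha) :
  exists L : nat -> bool,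
    L 0%nat = false /\
    (* (i) limsup_n |L ∩ I_n| / |I_n| >= alpha *)
    (forall eps : R, 0 < eps -> forall N : nat,
        exists n : nat, (N <= n)%nat /\ alpha - eps < rdens L (a n) (b n)) /\
    (* (ii) for every finite F ⊆ L, A ∩ ⋂_{x∈F} (A - x) is infinite *)
    (forall F : list nat, (forall x, In x F -> L x = true) ->
        infinite_set (in_shift_inter A F)).
Proof.
  set (lam := fun j => ilen (a j) (b j)).
  set (eta := threshold alpha).
  destruct (choice (fun k j : nat => (k <= j)%nat /\ (1 <= lam j)%nat /\ forall y,
               INR (count A (y + a j) (lam j)) <= (alpha + eta k * eta k) * INR (lam j))
              (fun k => test_window A alpha a b ha hlen hBD (eta k) (threshold_pos alpha k halpha) k))
    as [m hm].
  set (light_k := fun k => light A (a (m k)) (lam (m k)) (alpha - eta k)).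
  destruct (pattern_compactness A (fun K y => A y = true /\ anyb light_k K y = false))
    as [w hw].
  { intros K K' y HK [HAy Hany]. split; [auto|]. exact (anyb_mono _ _ _ _ HK Hany). }
  { intros K N. destruct (avoid_light A alpha a b halpha hlen hdens m
      (fun k => proj2 (hm k)) K N) as [y Hy]. exists y. tauto. }
  exists (fun x => (0 <? x)%nat && w x). split; [reflexivity|]. split.
  - apply (copied_upper_density A alpha a b _ m eta (fun k => proj1 (hm k)) (cv_pow_half _)).
    intros k. destruct (hw (S (b (m k))) (S k) 0%nat) as [y [_ [[_ Hany] Hcopy]]].
    exists y. split; [exact (anyb_false _ _ _ _ (Nat.lt_succ_diag_r k) Hany)|].
    intros i Hi. unfold lam, ilen in Hi.
    rewrite <- Nat.add_assoc, Hcopy by lia. specialize (ha (m k)).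
    replace (0 <? a (m k) + i)%nat with true by (symmetry; apply Nat.ltb_lt; lia). reflexivity.
  - intros F HF. apply (pattern_return_times A w).
    + intros p N. destruct (hw p 0%nat N) as [y [Hy [[HAy _] Hcopy]]]. exists y. auto.
    + intros x Hx. apply (andb_prop _ _ (HF x Hx)).
Qed.
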